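(* For any set system $\Omega$ there is an integer $K_\Omega$ such that for all $k\ge K_\Omega$, the set system $k\Omega$ belongs to $\mathfrak{BC}$. That is, every complex zero $q$ of $H_{k\Omega}(q)$ satisfies $|q|\le1$.
   Context: A set system $\Omega$ on a finite set $E$ is a nonempty collection of subsets of $E$ (its faces). Let $d=d_\Omega$ be the maximum size of a face, let $f_i$ be the number of faces of size $i$, and let $F_\Omega(z)=\sum_{i=0}^df_iz^i$. The $H$-polynomial is $H_\Omega(q)=(1-q)^dF_\Omega\big(\frac{q}{1-q}\big)$. $\mathfrak{BC}$ is the class of set systems whose $H$-polynomial is Schur quasi-stable, i.e. has all complex zeros in $|q|\le1$. For a positive integer $k$, $k\Omega$ is the set system on $E\times\{1,\ldots,k\}$ defined as follows: $\{(e_1,i_1),\ldots,(e_r,i_r)\}$ is a face of $k\Omega$ if and only if $e_1,\ldots,e_r$ are pairwise distinct and $\{e_1,\ldots,e_r\}\in\Omega$. *)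

From HB Require Import structures.
From mathcomp Require Import all_boot all_order all_algebra all_field.
Set Implicit Arguments. Unset Strict Implicit. Unset Printing Implicit Defensive.
Import Order.TTheory GRing.Theory Num.Theory.

(* A set system on a finite ground set E is Om : {set {set E}} with Om != set0. *)

Definition fnum (E : finType) (Om : {set {set E}}) (i : nat) : nat :=
  #|[set S in Om | #|S| == i]|.

Definition dimss (E : finType) (Om : {set {set E}}) : nat :=
  \max_(S in Om) #|S|.

Local Open Scope ring_scope.

(* H_Om(q) = (1-q)^d F(q/(1-q)) = sum_i f_i q^i (1-q)^(d-i), over the complex
   algebraic numbers algC (H has integer coefficients, so all its complex
   zeros lie in algC). *)
Definition Hpoly (E : finType) (Om : {set {set E}}) : {poly algC} :=
  \sum_(i < (dimss Om).+1)
     (fnum Om i)%:R *: ('X ^+ i * (1 - 'X) ^+ (dimss Om - i)).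

Definition in_BC (E : finType) (Om : {set {set E}}) : Prop :=
  forall z : algC, root (Hpoly Om) z -> `|z| <= 1.

Definition kmult (E : finType) (Om : {set {set E}}) (k : nat)
  : {set {set (E * 'I_k)}} :=
  [set S : {set (E * 'I_k)} |
     [forall x in S, forall y in S, (x.1 == y.1) ==> (x == y)]
     && ((fun x : E * 'I_k => x.1) @: S \in Om)].

From HB Require Import structures.
From mathcomp Require Import all_boot all_order all_algebra all_field.
From mathcomp Require Import ring.
Set Implicit Arguments. Unset Strict Implicit. Unset Printing Implicit Defensive.
Import Order.TTheory GRing.Theory Num.Theory.

(* Over a face T of Om, kmult Om k has exactly k ^ #|T| faces (choose one copy
   of each element of T), so f_i(kOm) = k^i f_i(Om) and d(kOm) = d(Om); hence
   H_kOm(q) = (1 - q)^d F_Om(kq / (1 - q)).  If |q| > 1 were a zero, then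
   w = kq / (1 - q) would be a zero of F_Om, whose coefficients are natural
   numbers summing to #|Om| with a nonzero leading one, so Cauchy's bound gives
   |w| <= #|Om|.  But |1 - q| < 2|q| forces |w| > k / 2, which fails once
   k >= 2 #|Om|. *)

Section Blowup.
Variables (E : finType) (k : nat).

Definition partial_graph (S : {set E * 'I_k}) : bool :=
  [forall x in S, forall y in S, (x.1 == y.1) ==> (x == y)].

Definition shadow (S : {set E * 'I_k}) : {set E} := fst @: S.

Lemma partial_graphP (S : {set E * 'I_k}) :
  reflect {in S &, forall x y, x.1 = y.1 -> x = y} (partial_graph S).
Proof.
apply: (iffP forallP) => [graphS x y xS yS exy | injS x].
  by move/(_ x): graphS; rewrite xS => /forall_inP/(_ y yS); rewrite exy eqxx => /eqP.
apply/implyP => xS; apply/forall_inP => y yS; apply/implyP => /eqP exy.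
by rewrite (injS x y).
Qed.

Lemma card_shadow (S : {set E * 'I_k}) : partial_graph S -> #|shadow S| = #|S|.
Proof. by move/partial_graphP/card_in_imset. Qed.

Definition graph_of (f : {ffun E -> option 'I_k}) : {set E * 'I_k} :=
  [set p | f p.1 == Some p.2].

Lemma graph_of_inj : injective graph_of.
Proof.
move=> f g fg; apply/ffunP => x.
have fgx j : (f x == Some j) = (g x == Some j).
  by have := congr1 (fun A : {set E * 'I_k} => (x, j) \in A) fg; rewrite /= !inE.
case fx: (f x) => [j|]; case gx: (g x) => [j'|] //.
- by have := fgx j; rewrite fx gx eqxx => /esym/eqP.
- by have := fgx j; rewrite fx gx eqxx.
- by have := fgx j'; rewrite fx gx eqxx.
Qed.

Lemma partial_graphs_over (T : {set E}) :
  [set S | partial_graph S & shadow S == T]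
  = graph_of @: pffun_on None T (predC1 None).
Proof.
apply/setP => S; rewrite inE.
apply/idP/imsetP => [/andP[/partial_graphP graphS /eqP <-]|].
  pose f := [ffun x => [pick j | (x, j) \in S]].
  have Sf x j : ((x, j) \in S) = (f x == Some j).
    rewrite ffunE; case: pickP => [j' Sj'|/(_ j)->//].
    apply/idP/eqP => [Sj|[<-]//].
    by case: (graphS _ _ Sj Sj' erefl) => ->.
  exists f; last by apply/setP => -[x j]; rewrite inE Sf.
  apply/familyP => x /=; case: ifP => [/imsetP[[y j] Sy /= ->]|xS] /=.
    by rewrite Sf in Sy; rewrite (eqP Sy).
  rewrite ffunE; case: pickP => [j Sj|//].
  by rewrite (imset_f _ Sj) in xS.
case=> f /familyP f_on ->; apply/andP; split.
  apply/partial_graphP => -[x i] [y j]; rewrite !inE /= => /eqP fx /eqP fy exy.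
  by subst y; rewrite fx in fy; case: fy => ->.
apply/eqP/setP => x; have := f_on x; case: ifP => xT /=.
  case fx: (f x) => [j|] // _; apply/imsetP; exists (x, j) => //.
  by rewrite inE fx.
move=> /eqP fx; apply/imsetP => -[[y j]]; rewrite inE /= => /eqP fy ey.
by subst y; rewrite fx in fy.
Qed.

Lemma card_partial_graphs_over (T : {set E}) :
  #|[set S | partial_graph S & shadow S == T]| = k ^ #|T|.
Proof.
rewrite partial_graphs_over card_imset; last exact: graph_of_inj.
by rewrite card_pffun_on cardC1 card_option card_ord.
Qed.

End Blowup.

Section FaceNumbers.
Variables (E : finType) (Om : {set {set E}}).

Lemma kmultE (k : nat) :
  kmult Om k = [set S | partial_graph S & shadow S \in Om].
Proof. by []. Qed.

Lemma fnum_kmult (k i : nat) : fnum (kmult Om k) i = k ^ i * fnum Om i.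
Proof.
rewrite /fnum kmultE -[LHS]sum1_card -[in RHS]sum1_card big_distrr /=.
rewrite (partition_big (@shadow E k) (fun T => (T \in Om) && (#|T| == i))); last first.
  by move=> S; rewrite !inE => /andP[/andP[graphS ->]]; rewrite card_shadow.
apply: eq_big => [T|T /andP[TOm /eqP <-]]; first by rewrite inE.
rewrite muln1 -card_partial_graphs_over sum1_card; apply: eq_card => S.
rewrite -[X in X = _]topredE /= !inE; apply/idP/idP => [|/andP[graphS /eqP shS]].
  by case/andP=> /andP[/andP[-> _] _] ->.
by rewrite graphS -card_shadow // shS TOm !eqxx.
Qed.

Lemma card_face_le_dimss (S : {set E}) : S \in Om -> #|S| <= dimss Om.
Proof. exact: leq_bigmax_cond. Qed.

Lemma dimss_kmult (k : nat) : 0 < k -> dimss (kmult Om k) = dimss Om.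
Proof.
move=> k_gt0; apply/eqP; rewrite eqn_leq; apply/andP; split.
  apply/bigmax_leqP => S; rewrite kmultE inE => /andP[graphS shSOm].
  by rewrite -card_shadow // card_face_le_dimss.
apply/bigmax_leqP => T TOm.
pose S := (fun x => (x, Ordinal k_gt0)) @: T.
have graphS : partial_graph S.
  by apply/partial_graphP => _ _ /imsetP[x _ ->] /imsetP[y _ ->] /= ->.
have shS : shadow S = T.
  apply/setP => x; apply/imsetP/idP => [[_ /imsetP[y yT ->] ->] //|xT].
  by exists (x, Ordinal k_gt0) => //; apply: imset_f.
rewrite -shS card_shadow //; apply: leq_bigmax_cond.
by rewrite kmultE inE graphS shS.
Qed.

Lemma sum_fnum : \sum_(i < (dimss Om).+1) fnum Om i = #|Om|.
Proof.
rewrite -sum1_card.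
rewrite (partition_big (fun S : {set E} => inord #|S| : 'I_(dimss Om).+1) xpredT) //=.
apply: eq_bigr => i _; rewrite /fnum -sum1_card; apply: eq_bigl => S.
rewrite !inE; case SOm: (S \in Om) => //=.
by rewrite -val_eqE /= inordK // ltnS card_face_le_dimss.
Qed.

Lemma fnum_dimss_gt0 : Om != set0 -> 0 < fnum Om (dimss Om).
Proof.
rewrite -card_gt0 => /(eq_bigmax_cond (fun S : {set E} => #|S|))[S SOm maxS].
rewrite /fnum card_gt0; apply/set0Pn; exists S.
by rewrite inE SOm /dimss maxS eqxx.
Qed.

End FaceNumbers.

Local Open Scope ring_scope.

Lemma cauchy_root_bound (R : numDomainType) (p : {poly R}) (z : R) :
  root p z -> `|lead_coef p| * `|z| <= \sum_(i < size p) `|p`_i|.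
Proof.
have [->|p_neq0] := eqVneq p 0; first by rewrite lead_coef0 normr0 mul0r sumr_ge0.
have [d size_p] : exists d, size p = d.+1.
  by exists (size p).-1; rewrite prednK ?size_poly_gt0.
rewrite /root horner_coef /lead_coef size_p big_ord_recr [in X in _ <= X]big_ord_recr /=.
rewrite addrC addr_eq0 => /eqP top_eq.
have [z_le1|z_gt1] := real_leP (normr_real z) (real1 R).
  by rewrite ler_wpDl ?sumr_ge0 // ler_piMr.
apply: ler_wpDr => //; case: d {size_p} top_eq => [|d] top_eq.
  by move: top_eq; rewrite !big_ord0 oppr0 expr0 mulr1 => ->; rewrite normr0 mul0r.
have zd_gt0 : 0 < `|z| ^+ d by rewrite exprn_gt0 // (lt_trans ltr01).
rewrite -(ler_pM2r zd_gt0) -mulrA -exprS.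
move: (congr1 Num.norm top_eq); rewrite normrM normrX normrN => ->.
rewrite mulr_suml (le_trans (ler_norm_sum _ _ _)) // ler_sum // => i _.
rewrite normrM normrX ler_wpM2l // ler_weXn2l ?(ltW z_gt1) //.
by rewrite -ltnS.
Qed.

Definition Fpoly (E : finType) (Om : {set {set E}}) : {poly algC} :=
  \poly_(i < (dimss Om).+1) (fnum Om i)%:R.

Lemma horner_Hpoly (E : finType) (Om : {set {set E}}) (z : algC) :
  z != 1 -> (Hpoly Om).[z] = (1 - z) ^+ dimss Om * (Fpoly Om).[z / (1 - z)].
Proof.
rewrite eq_sym -subr_eq0 => u_neq0.
rewrite /Hpoly horner_sum horner_poly mulr_sumr; apply: eq_bigr => i _.
have -> : (1 - z) ^+ dimss Om = (1 - z) ^+ (dimss Om - i) * (1 - z) ^+ i.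
  by rewrite -exprD subnK // -ltnS.
rewrite hornerZ hornerM hornerXn horner_exp hornerD hornerN hornerX hornerC.
rewrite expr_div_n mulrA.
have ui_neq0 : (1 - z) ^+ i != 0 by rewrite expf_neq0.
by move: ((1 - z) ^+ i) ui_neq0 => U U_neq0; field.
Qed.

Section FacePolynomial.
Variables (E : finType) (Om : {set {set E}}).

Lemma horner_Fpoly_kmult (k : nat) (w : algC) :
  (0 < k)%N -> (Fpoly (kmult Om k)).[w] = (Fpoly Om).[k%:R * w].
Proof.
move=> k_gt0; rewrite !horner_poly dimss_kmult //; apply: eq_bigr => i _.
by rewrite fnum_kmult natrM natrX exprMn mulrCA mulrA.
Qed.

Lemma root_Hpoly_kmult (k : nat) (z : algC) : (0 < k)%N -> z != 1 ->
  root (Hpoly (kmult Om k)) z = root (Fpoly Om) (k%:R * (z / (1 - z))).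
Proof.
move=> k_gt0 z_neq1; have u_neq0 : 1 - z != 0 by rewrite subr_eq0 eq_sym.
rewrite /root horner_Hpoly // dimss_kmult // horner_Fpoly_kmult //.
by rewrite mulf_eq0 expf_eq0 (negbTE u_neq0) andbF.
Qed.

Hypothesis Om_neq0 : Om != set0.

Lemma size_Fpoly : size (Fpoly Om) = (dimss Om).+1.
Proof. by rewrite size_poly_eq // pnatr_eq0 -lt0n fnum_dimss_gt0. Qed.

Lemma lead_coef_Fpoly : lead_coef (Fpoly Om) = (fnum Om (dimss Om))%:R.
Proof. by rewrite lead_coef_poly // pnatr_eq0 -lt0n fnum_dimss_gt0. Qed.

Lemma Fpoly_root_norm_le (w : algC) : root (Fpoly Om) w -> `|w| <= #|Om|%:R.
Proof.
move/cauchy_root_bound; rewrite lead_coef_Fpoly size_Fpoly normr_nat.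
under eq_bigr do rewrite coef_poly ltn_ord normr_nat.
rewrite -natr_sum sum_fnum; apply: le_trans.
by rewrite ler_peMl // ler1n fnum_dimss_gt0.
Qed.

End FacePolynomial.

Theorem proposition6p2 (E : finType) (Om : {set {set E}}) :
  Om != set0 ->
  exists K : nat, forall k : nat, (0 < k)%N -> (K <= k)%N -> in_BC (kmult Om k).
Proof.
move=> Om_neq0; exists (2 * #|Om|)%N => k k_gt0 k_ge z root_z.
have [//|z_gt1] := real_leP (normr_real z) (real1 algC); exfalso.
have z_gt0 : 0 < `|z| := lt_trans ltr01 z_gt1.
have z_neq1 : z != 1 by apply: contraTneq z_gt1 => ->; rewrite normr1 ltxx.
have u_gt0 : 0 < `|1 - z| by rewrite normr_gt0 subr_eq0 eq_sym.
move: root_z; rewrite root_Hpoly_kmult // => /(Fpoly_root_norm_le Om_neq0).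
rewrite normrM normr_nat normrM normfV mulrA ler_pdivrMr // => kz_le.
have u_lt : `|1 - z| < 2 * `|z|.
  by rewrite mulr2n mulrDl mul1r (le_lt_trans (ler_normB _ _)) // normr1 ltrD2r.
have : k%:R * `|z| < (2 * #|Om|)%:R * `|z|.
  rewrite (le_lt_trans kz_le) // natrM [2 * _]mulrC -mulrA ltr_pM2l //.
  by rewrite ltr0n card_gt0.
by rewrite ltr_pM2r // ltr_nat ltnNge k_ge.
Qed.
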